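(* Let $S\subseteq T$ be an extension of discrete valuation rings with fraction fields $K\subseteq L$ such that $L/K$ is finite Galois of degree $m$ with Galois group $G$, let $t$ generate the maximal ideal of $T$ with valuation $v_t$, and assume $T=S[\theta]$ for some $\theta\in T$. Enumerate $G=\{\sigma_0,\dots,\sigma_{m-1}\}$ with $\sigma_0=\mathrm{id}_T$ such that $\tau=(\tau_0,\dots,\tau_{m-1}):=(\theta^{\sigma_0},\dots,\theta^{\sigma_{m-1}})$ is minimally ordered, and identify $\prod_{\sigma\in G}T$ with $\prod_{j\in[0,m-1]}T$ via $\sigma_j\leftrightarrow j$. Consider the $T$-linear Dedekind embedding $\delta\colon T\otimes_ST\to\prod_{\sigma\in G}T$, $x\otimes y\mapsto(xy^\sigma)_{\sigma\in G}$ ($T$ acting on the left tensor factor). Then: (i) for $i\in[0,m-1]$ the $(i+1)$st $T$-linear elementary divisor of $\delta$ has valuation $\phi_i:=\sum_{j\in[0,i-1]}v_t(\theta^{\sigma_i}-\theta^{\sigma_j})$; in particular $(\phi_i)_{i\in[0,m-1]}$ depends neither on the choice of $\theta$ nor on the chosen minimal ordering; (ii) the image of $\delta$ equals \[ \Bigl\{(\eta_j)_{j\in[0,m-1]}\in\prod_{j\in[0,m-1]}T\;\Bigm|\;\eta_i-\sum_{j\in[0,i-1]}\eta_jL_{j,i}(\tau)\in t^{\phi_i}T\ \text{for all } i\in[0,m-1]\Bigr\}; \] (iii) the elements $\bigl(\prod_{k\in[0,i-1]}(\theta^{\sigma_j}-\theta^{\sigma_k})\bigr)_{j\in[0,m-1]}$,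 $i\in[0,m-1]$, form a $T$-linear basis of the image of $\delta$.
   Context: $y^\sigma$ denotes the image of $y$ under $\sigma$. A tuple $(\xi_0,\dots,\xi_{m-1})$ of pairwise distinct elements of $T$ is minimally ordered if $\sum_{i\in[0,j-1]}v_t(\xi_j-\xi_i)\le\sum_{i\in[0,j-1]}v_t(\xi_k-\xi_i)$ for all $j\in[0,m-1]$ and $k\in[j+1,m-1]$. For $j<i$, $L_{j,i}(\tau):=\prod_{k\in[0,i-1]\setminus\{j\}}(\tau_i-\tau_k)/\prod_{k\in[0,i-1]\setminus\{j\}}(\tau_j-\tau_k)\in L$. Elementary divisors of an injective $T$-linear map of free rank-$m$ modules: $t^{e_0},\dots,t^{e_{m-1}}$ with $e_0\le\dots\le e_{m-1}$ such that in suitable bases the map is diagonal with these entries; the $(i+1)$st has valuation $e_i$. *)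

From HB Require Import structures.
From mathcomp Require Import all_boot all_order all_algebra all_fingroup all_field.
Set Implicit Arguments. Unset Strict Implicit. Unset Printing Implicit Defensive.
Import Order.TTheory GRing.Theory Num.Theory.
Local Open Scope ring_scope.

(* L : splittingFieldType K is a finite (normal) extension
   of K; it is Galois when [galois 1 {:L}] holds, with group gal_of {:L}. *)

Section Defs.
Variable (L : fieldType).

(* v : L -> int is a discrete valuation on L (values at 0 are irrelevant). *)
Definition is_dval (v : L -> int) : Prop :=
  (forall x y : L, x != 0 -> y != 0 -> v (x * y) = v x + v y) /\
  (forall x y : L, x != 0 -> y != 0 -> x + y != 0 ->
      Num.min (v x) (v y) <= v (x + y)).

Definition inT (v : L -> int) (x : L) : Prop := x = 0 \/ 0 <= v x.

Definition in_tpow (v : L -> int) (t : L) (n : int) (x : L) : Prop :=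
  exists y, inT v y /\ x = t ^ n * y.

Definition minimally_ordered (v : L -> int) (m : nat) (xi : 'I_m -> L) : Prop :=
  injective xi /\
  forall j k : 'I_m, (j < k)%N ->
    \sum_(i < m | (i < j)%N) v (xi j - xi i) <= \sum_(i < m | (i < j)%N) v (xi k - xi i).

Definition Lcoef (m : nat) (tau : 'I_m -> L) (j i : 'I_m) : L :=
  (\prod_(k < m | ((k < i)%N && (k != j))) (tau i - tau k)) /
  (\prod_(k < m | ((k < i)%N && (k != j))) (tau j - tau k)).

Definition phi (v : L -> int) (m : nat) (tau : 'I_m -> L) (i : 'I_m) : int :=
  \sum_(j < m | (j < i)%N) v (tau i - tau j).

(* T-linear combinations; T-submodules of T^m given as predicates on 'rV[L]_m *)
(* e : 'I_m -> int are the valuations of the elementary divisors of the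
   inclusion M \subset T^m: e is nondecreasing and there is a T-basis
   (rows of P, P invertible over T) of T^m such that M is the T-span of
   the t^(e_i) * (row i P). *)
Definition elem_divs (v : L -> int) (t : L) (m : nat)
    (M : 'rV[L]_m -> Prop) (e : 'I_m -> int) : Prop :=
  (forall i j : 'I_m, (i <= j)%N -> e i <= e j) /\
  exists P Q : 'M[L]_m,
    (forall i j, inT v (P i j)) /\ (forall i j, inT v (Q i j)) /\
    P *m Q = 1%:M /\
    forall eta : 'rV[L]_m,
      M eta <-> exists c : 'rV[L]_m, (forall i, inT v (c 0 i)) /\
                  eta = (\row_i (c 0 i * t ^ (e i))) *m P.

Definition is_T_basis (v : L -> int) (m : nat) (M : 'rV[L]_m -> Prop)
    (b : 'I_m -> 'rV[L]_m) : Prop :=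
  (forall i, M (b i)) /\
  (forall eta, M eta -> exists c : 'I_m -> L,
       (forall i, inT v (c i)) /\ eta = \sum_i c i *: b i) /\
  (forall c : 'I_m -> L, (forall i, inT v (c i)) ->
       \sum_i c i *: b i = 0 -> forall i, c i = 0).
End Defs.

(* Image of the Dedekind embedding delta : T (x)_S T -> prod_{j} T,
   x (x) y |-> (x * sigma_j y)_j ; T-linear in the left factor, so its image
   is the set of finite sums of the vectors (x * sigma_j y)_j, x, y in T. *)
Definition im_delta (K : fieldType) (L : splittingFieldType K) (v : L -> int)
    (m : nat) (sigma : 'I_m -> gal_of {:L}) (eta : 'rV[L]_m) : Prop :=
  exists (n : nat) (x y : 'I_n -> L),
    (forall k, inT v (x k)) /\ (forall k, inT v (y k)) /\
    eta = \sum_(k < n) \row_j (x k * sigma j (y k)).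

(* The Newton rows N_i(tau) = (prod_(k<i) (tau_j - tau_k))_j, i < m, are a triangular
   T-basis of the module they span, and that module is the image of delta: both are
   the smallest T-submodule of T^m containing (1,...,1) and stable under
   multiplication by tau = (tau_j)_j, since delta(x (x) p(theta)) = x p(tau) and
   N_(i+1)(tau) = tau N_i(tau) - tau_i N_i(tau).
   By Lagrange interpolation at tau_0, ..., tau_(i-1), the defect
   eta_i - sum_(j<i) eta_j L_(j,i)(tau) of eta = sum_i c_i N_i(tau) is c_i N_i(tau_i),
   of valuation v(c_i) + phi_i; this gives (ii) and (iii).  Dividing each Newton row
   by N_i(tau_i) yields a unitriangular matrix, integral because tau is minimally
   ordered, in which the image of delta is spanned by the rows scaled by t^phi_i.
   Elementary divisors are unique because, for each k, the span of the last m - k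
   rows of one adapted basis meets the span of the first k + 1 rows of the other. *)

From HB Require Import structures.
From mathcomp Require Import all_boot all_order all_algebra all_fingroup all_field.
From mathcomp Require Import zify.
From Stdlib Require Import FunctionalExtensionality PropExtensionality.
Set Implicit Arguments. Unset Strict Implicit. Unset Printing Implicit Defensive.
Import Order.TTheory GRing.Theory Num.Theory.
Local Open Scope ring_scope.

Lemma mul_row_pid_mx (F : pzSemiRingType) (m r : nat) (a : 'rV[F]_m) (i : 'I_m) :
  (a *m pid_mx r) 0 i = if (i < r)%N then a 0 i else 0.
Proof.
rewrite mxE (bigD1 i) //= big1 ?addr0 => [|j ji]; rewrite mxE.
  by rewrite eqxx; case: ifP; rewrite ?mulr1 ?mulr0.
by rewrite (inj_eq val_inj) (negPf ji) mulr0.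
Qed.

Lemma row_support_meet (F : fieldType) (m : nat) (P P' : 'M[F]_m) (k : 'I_m) :
  P \in unitmx -> P' \in unitmx ->
  exists y z : 'rV[F]_m, [/\ z != 0, y *m P' = z *m P,
    forall i : 'I_m, (i < k)%N -> y 0 i = 0 & forall i : 'I_m, (k < i)%N -> z 0 i = 0].
Proof.
move=> Pu P'u.
pose U := copid_mx k *m P'; pose W := (pid_mx k.+1 : 'M_m) *m P.
have rU : \rank U = (m - k)%N.
  by rewrite mxrankMfree ?row_free_unit // rank_copid_mx // ltnW.
have rW : \rank W = k.+1 by rewrite mxrankMfree ?row_free_unit // rank_pid_mx.
have : (U :&: W)%MS != 0.
  rewrite -mxrank_eq0; apply: contraTneq (rank_leq_col (U + W)%MS) => r0.
  have := mxrank_sum_cap U W; rewrite r0 addn0 rU rW => ->.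
  by rewrite -ltnNge addnS subnK // ltnW.
case/rowV0Pn => x xUW x0.
have /submxP [a xa] := submx_trans xUW (capmxSl _ _).
have /submxP [b xb] := submx_trans xUW (capmxSr _ _).
exists (a *m copid_mx k), (b *m pid_mx k.+1); split.
- by apply: contra x0 => /eqP z0; rewrite xb mulmxA z0 mul0mx.
- by rewrite -!mulmxA -xa -xb.
- move=> i ik; rewrite /copid_mx mulmxBr mulmx1.
  by rewrite [(a - _) 0 i]mxE [(- (_ : 'rV_m)) 0 i]mxE mul_row_pid_mx ik subrr.
- by move=> i ki; rewrite mul_row_pid_mx ltnS leqNgt ki.
Qed.

Lemma lagrange_interp (F : fieldType) (I : finType) (P : pred I) (a : I -> F)
    (p : {poly F}) : injective a -> (size p <= #|P|)%N -> forall z,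
  p.[z] = \sum_(j | P j) p.[a j] *
     ((\prod_(k | P k && (k != j)) (z - a k)) /
      (\prod_(k | P k && (k != j)) (a j - a k))).
Proof.
move=> a_inj sp z.
pose d j := \prod_(k | P k && (k != j)) (a j - a k).
pose w j := \prod_(k | P k && (k != j)) ('X - (a k)%:P).
have d0 j : d j != 0.
  by apply/prodf_neq0 => k /andP[_ kj]; rewrite subr_eq0 (inj_eq a_inj) eq_sym.
have wE j x : (w j).[x] = \prod_(k | P k && (k != j)) (x - a k).
  by rewrite horner_prod; apply: eq_bigr => k _; rewrite hornerXsubC.
have size_w j : P j -> (size (w j) <= #|P|)%N.
  move=> Pj; rewrite /w -big_filter size_prod_XsubC size_filter (cardD1 j) [j \in P]Pj.
  rewrite ltnS -sum1_count sum1_card.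
  by apply/subset_leq_card/subsetP => k; rewrite unfold_in !inE andbC.
pose q := \sum_(j | P j) (p.[a j] / d j) *: w j.
suff pq : p = q.
  by rewrite {1}pq horner_sum; apply: eq_bigr => j _; rewrite hornerZ wE mulrAC mulrA.
apply/eqP; rewrite -subr_eq0; apply/eqP.
apply: (@roots_geq_poly_eq0 _ _ [seq a k | k <- enum P]).
- apply/allP => x /mapP[j0]; rewrite mem_enum => Pj0 ->.
  rewrite /root hornerD hornerN horner_sum (bigD1 j0) //= big1 => [|j /andP[Pj jj0]].
    by rewrite hornerZ wE -/(d j0) addr0 mulfVK // subrr.
  rewrite hornerZ wE (bigD1 j0) /=; last by rewrite eq_sym jj0 andbT; apply: Pj0.
  by rewrite subrr mul0r mulr0.
- by rewrite map_inj_uniq // enum_uniq.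
- rewrite size_map -cardE; apply: leq_trans (size_polyD _ _) _.
  rewrite size_polyN geq_max sp /=; apply: leq_trans (size_sum _ _ _) _.
  by apply/bigmax_leqP => j Pj; apply: leq_trans (size_scale_leq _ _) (size_w j Pj).
Qed.

Section DVR.
Variables (L : fieldType) (v : L -> int).
Hypothesis hv : is_dval v.

(* [v 0] is not constrained by [is_dval], hence the disjunct [x = 0]. *)
Definition vge (n : int) (x : L) : Prop := x = 0 \/ n <= v x.

Lemma dvalM x y : x != 0 -> y != 0 -> v (x * y) = v x + v y.
Proof. by case: hv => vM _; apply: vM. Qed.

Lemma dval1 : v 1 = 0.
Proof. by apply: (addrI (v 1)); rewrite -dvalM ?oner_neq0 // mulr1 addr0. Qed.

Lemma dvalV x : x != 0 -> v x^-1 = - v x.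
Proof.
by move=> x0; apply: (addrI (v x)); rewrite -dvalM ?invr_neq0 // mulfV // dval1 subrr.
Qed.

Lemma dvalN x : v (- x) = v x.
Proof.
have [->|x0] := eqVneq x 0; first by rewrite oppr0.
have n1 : (-1 : L) != 0 by rewrite oppr_eq0 oner_eq0.
have vN1 : v (-1) = 0.
  have := dvalM n1 n1; rewrite mulrNN mulr1 dval1 => /esym/eqP.
  by rewrite -mulr2n mulrn_eq0 /=; move/eqP.
by rewrite -mulN1r dvalM // vN1 add0r.
Qed.

Lemma dval_prod (I : Type) (r : seq I) (P : pred I) (F : I -> L) :
  (forall i, P i -> F i != 0) ->
  \prod_(i <- r | P i) F i != 0 /\
  v (\prod_(i <- r | P i) F i) = \sum_(i <- r | P i) v (F i).
Proof.
move=> F0; apply: (big_ind2 (fun a b => a != 0 /\ v a = b)) => //.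
- by rewrite oner_eq0 dval1.
- by move=> x1 x2 y1 y2 [x0 <-] [y0 <-]; rewrite mulf_neq0 // dvalM.
- by move=> i /F0.
Qed.

Lemma vge_one : vge 0 1.
Proof. by right; rewrite dval1. Qed.

Lemma vgeW m n x : m <= n -> vge n x -> vge m x.
Proof. by move=> mn [->|nx]; [left | right; apply: le_trans nx]. Qed.

Lemma vgeN n x : vge n x -> vge n (- x).
Proof. by move=> [->|nx]; [left; rewrite oppr0 | right; rewrite dvalN]. Qed.

Lemma vgeD n x y : vge n x -> vge n y -> vge n (x + y).
Proof.
move=> [->|nx]; first by rewrite add0r.
move=> [->|ny]; first by rewrite addr0; right.
have [xy0|xy0] := eqVneq (x + y) 0; first by left.
have [x0|x0] := eqVneq x 0; first by rewrite x0 add0r; right.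
have [y0|y0] := eqVneq y 0; first by rewrite y0 addr0; right.
by right; apply: le_trans (proj2 hv x y x0 y0 xy0); rewrite le_min nx ny.
Qed.

Lemma vgeB n x y : vge n x -> vge n y -> vge n (x - y).
Proof. by move=> nx ny; apply/vgeD/vgeN. Qed.

Lemma vgeM m n x y : vge m x -> vge n y -> vge (m + n) (x * y).
Proof.
move=> [->|mx]; first by rewrite mul0r; left.
move=> [->|ny]; first by rewrite mulr0; left.
have [->|x0] := eqVneq x 0; first by rewrite mul0r; left.
have [->|y0] := eqVneq y 0; first by rewrite mulr0; left.
by right; rewrite dvalM // lerD.
Qed.

Lemma vgeMT n x y : vge n x -> vge 0 y -> vge n (x * y).
Proof. by move=> nx y0; have := vgeM nx y0; rewrite addr0. Qed.

Lemma vgeTM n x y : vge 0 x -> vge n y -> vge n (x * y).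
Proof. by move=> x0 ny; have := vgeM x0 ny; rewrite add0r. Qed.

Lemma vge_sum n (I : Type) (r : seq I) (P : pred I) (F : I -> L) :
  (forall i, P i -> vge n (F i)) -> vge n (\sum_(i <- r | P i) F i).
Proof. by move=> nF; apply: big_ind => //; [left | apply: vgeD]. Qed.

Lemma vge_prod (I : Type) (r : seq I) (P : pred I) (F : I -> L) :
  (forall i, P i -> vge 0 (F i)) -> vge 0 (\prod_(i <- r | P i) F i).
Proof. by move=> TF; apply: big_ind => //; [apply: vge_one | apply: vgeMT]. Qed.

Lemma vgeMr n x a : x != 0 -> vge (n + v x) (a * x) <-> vge n a.
Proof.
move=> x0; split=> [[/eqP|]|[->|na]]; rewrite ?mul0r; try by left.
- by rewrite mulf_eq0 (negPf x0) orbF => /eqP ->; left.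
- have [->|a0] := eqVneq a 0; first by left.
  by rewrite dvalM // lerD2r => na; right.
- have [->|a0] := eqVneq a 0; first by rewrite mul0r; left.
  by right; rewrite dvalM // lerD2r.
Qed.

Lemma vge_signr (n : nat) : vge 0 ((-1) ^+ n).
Proof. by rewrite -signr_odd; case: odd; [apply/vgeN/vge_one | apply: vge_one]. Qed.

Lemma vge_mulmx n (p k q : nat) (A : 'M[L]_(p, k)) (R : 'M[L]_(k, q)) :
  (forall i j, vge n (A i j)) -> (forall i j, vge 0 (R i j)) ->
  forall i j, vge n ((A *m R) i j).
Proof. by move=> nA TR i j; rewrite mxE; apply: vge_sum => l _; apply: vgeMT. Qed.

Lemma vge_det (k : nat) (A : 'M[L]_k) : (forall i j, vge 0 (A i j)) -> vge 0 (\det A).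
Proof.
move=> TA; apply: vge_sum => s _; apply: vgeTM (vge_signr _) _.
by apply: vge_prod => i _; apply: TA.
Qed.

Lemma vge_adj (k : nat) (A : 'M[L]_k) :
  (forall i j, vge 0 (A i j)) -> forall i j, vge 0 (\adj A i j).
Proof.
move=> TA i j; rewrite mxE; apply: vgeTM (vge_signr _) _.
by apply: vge_det => a b; rewrite !mxE.
Qed.

Section Span.
Variables (k n : nat) (B : 'M[L]_(k, n)).

Definition Tspan (eta : 'rV[L]_n) : Prop :=
  exists c : 'rV[L]_k, (forall i, vge 0 (c 0 i)) /\ eta = c *m B.

Lemma Tspan0 : Tspan 0.
Proof. by exists 0; split=> [i|]; rewrite ?mul0mx // mxE; left. Qed.

Lemma TspanD x y : Tspan x -> Tspan y -> Tspan (x + y).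
Proof.
move=> [c [Tc ->]] [d [Td ->]]; exists (c + d); rewrite mulmxDl; split=> // i.
by rewrite mxE; apply: vgeD.
Qed.

Lemma TspanZ a x : vge 0 a -> Tspan x -> Tspan (a *: x).
Proof.
move=> Ta [c [Tc ->]]; exists (a *: c); rewrite scalemxAl; split=> // i.
by rewrite mxE; apply: vgeTM.
Qed.

Lemma Tspan_row i : Tspan (row i B).
Proof.
exists (delta_mx 0 i); rewrite -rowE; split=> // l.
by rewrite mxE; case: (_ && _); [apply: vge_one | left].
Qed.

End Span.

Lemma Tspan_basis (m : nat) (B : 'M[L]_m) :
  B \in unitmx -> is_T_basis v (Tspan B) (fun i => row i B).
Proof.
move=> Bu; split; [exact: Tspan_row | split].
  by move=> _ [c [Tc ->]]; exists (fun i => c 0 i); rewrite -mulmx_sum_row.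
move=> c _ c0 i.
have : (\row_l c l) *m B = 0.
  by rewrite mulmx_sum_row -[RHS]c0; apply: eq_bigr => l _; rewrite mxE.
move/(congr1 (mulmx^~ (invmx B))); rewrite mulmxK // mul0mx => /rowP /(_ i).
by rewrite !mxE.
Qed.

Section Uniformizer.
Variables (t : L) (ht0 : t != 0) (ht : v t = 1).

Lemma dval_texpz (n : int) : v (t ^ n) = n.
Proof.
have vtn (k : nat) : v (t ^+ k) = k%:Z.
  elim: k => [|k IH]; first by rewrite expr0 dval1.
  by rewrite exprS dvalM ?expf_neq0 // IH ht -add1n PoszD.
case: n => k; first exact: vtn.
by rewrite /exprz dvalV ?expf_neq0 // vtn NegzE.
Qed.

Lemma vge_texpz n : vge n (t ^ n).
Proof. by right; rewrite dval_texpz. Qed.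

Lemma in_tpowE n x : in_tpow v t n x <-> vge n x.
Proof.
split=> [[y [Ty ->]]|nx]; first exact: vgeMT (vge_texpz n) Ty.
exists (t ^ (- n) * x); split.
  by have := vgeM (vge_texpz (- n)) nx; rewrite addNr.
by rewrite mulrA -expfzDr // subrr expr0z mul1r.
Qed.

Variable m : nat.

Definition ediv_form (e : 'I_m -> int) (P : 'M[L]_m) (eta : 'rV[L]_m) : Prop :=
  exists c : 'rV[L]_m, (forall i, inT v (c 0 i)) /\
    eta = (\row_i (c 0 i * t ^ (e i))) *m P.

Lemma ediv_formE e (P Q : 'M[L]_m) eta : P *m Q = 1%:M ->
  ediv_form e P eta <-> forall i, vge (e i) ((eta *m Q) 0 i).
Proof.
move=> PQ; split=> [[c [Tc ->]] i|eQ].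
  by rewrite -mulmxA PQ mulmx1 mxE; apply: vgeTM (Tc i) (vge_texpz _).
exists (\row_i (t ^ (- e i) * (eta *m Q) 0 i)); split=> [i|].
  by rewrite mxE; have := vgeM (vge_texpz (- e i)) (eQ i); rewrite addNr.
rewrite -[LHS]mulmx1 -(mulmx1C PQ) mulmxA; congr (_ *m _); apply/rowP => i.
by rewrite !mxE mulrAC -expfzDr // addNr expr0z mul1r.
Qed.

Lemma vge_normalize (e : 'I_m -> int) (z : 'rV[L]_m) : z != 0 ->
  exists (s : int) (i0 : 'I_m), [/\ z 0 i0 != 0, v (t ^ s * z 0 i0) = e i0
    & forall i, vge (e i) (t ^ s * z 0 i)].
Proof.
move=> z0; have /existsP [i1 zi1] : [exists i, z 0 i != 0].
  apply: contraR z0 => /existsPn zi; apply/eqP/rowP => i.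
  by rewrite mxE; apply/eqP/negPn/zi.
case: (@arg_minP _ _ _ i1 (fun i => z 0 i != 0) (fun i => v (z 0 i) - e i) zi1).
move=> i0 zi0 min0; exists (e i0 - v (z 0 i0)), i0; split=> //.
  by rewrite dvalM ?expfz_neq0 // dval_texpz subrK.
move=> i; have [->|zi] := eqVneq (z 0 i) 0; first by rewrite mulr0; left.
right; rewrite dvalM ?expfz_neq0 // dval_texpz.
have := min0 i zi; lia.
Qed.

Lemma ediv_le (e f : 'I_m -> int) (P Q P' Q' : 'M[L]_m) :
  (forall i j : 'I_m, (i <= j)%N -> e i <= e j) ->
  (forall i j : 'I_m, (i <= j)%N -> f i <= f j) ->
  (forall i j, vge 0 (P' i j)) -> (forall i j, vge 0 (Q i j)) ->
  P *m Q = 1%:M -> P' *m Q' = 1%:M ->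
  (forall eta, ediv_form e P eta -> ediv_form f P' eta) ->
  forall k, f k <= e k.
Proof.
move=> e_mono f_mono TP' TQ PQ P'Q' sub_ef k.
(* z P = y P' with z supported on [0, k] and y on [k, m); after rescaling, t^s z P
   lies in the e-module with some entry of t^s z of valuation exactly e i0. *)
have [y [z [z0 yz yk zk]]] :=
  row_support_meet k (proj1 (mulmx1_unit PQ)) (proj1 (mulmx1_unit P'Q')).
have [s [i0 [zi0 vzi0 ez]]] := vge_normalize e z0.
have i0k : (i0 <= k)%N by rewrite leqNgt; apply: contra zi0 => /zk ->.
have /(ediv_formE _ _ P'Q') : ediv_form f P' ((t ^ s *: y) *m P').
  apply/sub_ef/(ediv_formE _ _ PQ) => i.
  by rewrite -scalemxAl yz scalemxAl -mulmxA PQ mulmx1 mxE.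
rewrite -mulmxA P'Q' mulmx1 => fy.
have fky i : vge (f k) ((t ^ s *: y) 0 i).
  have [ik|ki] := ltnP i k; first by rewrite mxE yk // mulr0; left.
  exact: vgeW (f_mono _ _ ki) (fy i).
have : vge (f k) (((t ^ s *: y) *m (P' *m Q)) 0 i0).
  apply: vge_mulmx => [i j|]; first by rewrite ord1.
  exact: vge_mulmx.
rewrite mulmxA -scalemxAl yz scalemxAl -mulmxA PQ mulmx1 mxE => -[tz0|].
  by move/eqP: tz0; rewrite mulf_eq0 (negPf (expfz_neq0 s ht0)) (negPf zi0).
by rewrite vzi0 => /le_trans; apply; apply: e_mono.
Qed.

Lemma elem_divs_uniq (M : 'rV[L]_m -> Prop) (e f : 'I_m -> int) :
  elem_divs v t M e -> elem_divs v t M f -> e = f.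
Proof.
move=> [e_mono [P [Q [TP [TQ [PQ eM]]]]]] [f_mono [P' [Q' [TP' [TQ' [P'Q' fM]]]]]].
apply: functional_extensionality => k; apply/eqP; rewrite eq_le.
apply/andP; split.
  by apply: (ediv_le f_mono e_mono TP TQ' P'Q' PQ) => eta /fM /eM.
by apply: (ediv_le e_mono f_mono TP' TQ PQ P'Q') => eta /eM /fM.
Qed.

Section Nodes.
Variable tau : 'I_m -> L.
Hypotheses (tauT : forall j, vge 0 (tau j)) (tau_inj : injective tau).

Definition newton (i : nat) (x : L) : L := \prod_(k < m | (k < i)%N) (x - tau k).

Definition newton_row (i : nat) : 'rV[L]_m := \row_j newton i (tau j).

Definition newton_mx : 'M[L]_m := \matrix_(i < m) newton_row i.

Lemma newton_mxE i j : newton_mx i j = newton i (tau j).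
Proof. by rewrite !mxE. Qed.

Lemma newton0 x : newton 0 x = 1.
Proof. by rewrite /newton big_pred0. Qed.

Lemma newton_row0 : newton_row 0 = const_mx 1.
Proof. by apply/rowP => j; rewrite !mxE newton0. Qed.

Lemma newtonS (i : 'I_m) x : newton i.+1 x = newton i x * (x - tau i).
Proof.
rewrite /newton (bigD1 i) //= mulrC; congr (_ * _); apply: eq_bigl => k.
by rewrite ltnS andbC -(inj_eq val_inj) -ltn_neqAle.
Qed.

Lemma newton_root (i : nat) (j : 'I_m) : (j < i)%N -> newton i (tau j) = 0.
Proof. by move=> ji; rewrite /newton (bigD1 j) //= subrr mul0r. Qed.

Lemma newton_row_eq0 (i : nat) : (m <= i)%N -> newton_row i = 0.
Proof.
by move=> mi; apply/rowP => j; rewrite !mxE newton_root // (leq_trans _ mi).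
Qed.

Lemma vge_newton (i : nat) x : vge 0 x -> vge 0 (newton i x).
Proof. by move=> Tx; apply: vge_prod => k _; apply: vgeB. Qed.

Lemma dval_newton (i j : 'I_m) : (i <= j)%N ->
  newton i (tau j) != 0 /\
  v (newton i (tau j)) = \sum_(k < m | (k < i)%N) v (tau j - tau k).
Proof.
move=> ij; apply: dval_prod => k ki; rewrite subr_eq0 (inj_eq tau_inj).
by apply: contraTneq ki => <-; rewrite -leqNgt.
Qed.

Lemma newton_diag_neq0 (i : 'I_m) : newton i (tau i) != 0.
Proof. by case: (dval_newton (leqnn i)). Qed.

Lemma newton_mx_unit : newton_mx \in unitmx.
Proof.
rewrite unitmxE unitfE -det_tr det_trig; last first.
  by apply/is_trig_mxP => i j ji; rewrite !mxE newton_root.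
by apply/prodf_neq0 => i _; rewrite !mxE newton_diag_neq0.
Qed.

Lemma newton_interp (l i : 'I_m) :
  newton l (tau i) - \sum_(j < m | (j < i)%N) newton l (tau j) * Lcoef tau j i =
  if l == i then newton i (tau i) else 0.
Proof.
have [li|il|/val_inj <-] := ltngtP l i; last first.
- by rewrite eqxx big1 ?subr0 // => j jl; rewrite newton_root ?mul0r.
- rewrite -(inj_eq val_inj) gtn_eqF // newton_root // big1 ?subrr // => j ji.
  by rewrite newton_root ?mul0r // (ltn_trans ji).
rewrite -(inj_eq val_inj) ltn_eqF //; apply/eqP; rewrite subr_eq0; apply/eqP.
pose p := \prod_(k < m | (k < l)%N) ('X - (tau k)%:P).
have pE x : p.[x] = newton l x.
  by rewrite horner_prod; apply: eq_bigr => k _; rewrite hornerXsubC.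
have size_p : (size p <= #|fun k : 'I_m => (k < i)%N|)%N.
  rewrite /p -big_filter size_prod_XsubC size_filter -sum1_count sum1_card.
  apply/proper_card/properP; split; last by exists l; rewrite unfold_in //= subSnn.
  by apply/subsetP => k; rewrite !unfold_in /=; move/ltn_trans; apply.
rewrite -pE (lagrange_interp tau_inj size_p); apply: eq_bigr => j _.
by rewrite pE.
Qed.

Definition interp_defect (eta : 'rV[L]_m) : 'rV[L]_m :=
  \row_i (eta 0 i - \sum_(j < m | (j < i)%N) eta 0 j * Lcoef tau j i).

Lemma interp_defect_newton (c : 'rV[L]_m) :
  interp_defect (c *m newton_mx) = \row_i (c 0 i * newton i (tau i)).
Proof.
apply/rowP => i; rewrite !mxE.
under [X in _ - X]eq_bigr => j _ do rewrite mxE mulr_suml.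
under [X in _ - X]eq_bigr => j _ do under eq_bigr => l _ do rewrite -mulrA newton_mxE.
under [X in X - _]eq_bigr => l _ do rewrite newton_mxE.
rewrite exchange_big /= -sumrB.
under eq_bigr => l _ do rewrite -mulr_sumr -mulrBr newton_interp.
rewrite (bigD1 i) //= eqxx big1 ?addr0 // => l li.
by rewrite (negPf li) mulr0.
Qed.

Lemma Tspan_newtonE eta :
  Tspan newton_mx eta <-> forall i, vge (phi v tau i) (interp_defect eta 0 i).
Proof.
have phiE i : phi v tau i = 0 + v (newton i (tau i)).
  by rewrite add0r; case: (dval_newton (leqnn i)).
split=> [[c [Tc ->]] i|dP].
  by rewrite interp_defect_newton mxE phiE vgeMr ?newton_diag_neq0.
exists (eta *m invmx newton_mx); rewrite mulmxKV ?newton_mx_unit //; split=> // i.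
have := dP i; rewrite -{1}(mulmxKV newton_mx_unit eta) interp_defect_newton mxE.
by rewrite phiE vgeMr ?newton_diag_neq0.
Qed.

Lemma Tspan_newton_interpE eta :
  Tspan newton_mx eta <->
  (forall j, inT v (eta 0 j)) /\
  forall i : 'I_m, in_tpow v t (phi v tau i)
    (eta 0 i - \sum_(j < m | (j < i)%N) eta 0 j * Lcoef tau j i).
Proof.
have defectE i : interp_defect eta 0 i =
    eta 0 i - \sum_(j < m | (j < i)%N) eta 0 j * Lcoef tau j i by rewrite mxE.
split=> [Seta|[_ Deta]]; last by apply/Tspan_newtonE => i; rewrite defectE -in_tpowE.
split=> [j|i]; last by rewrite in_tpowE -defectE; move/Tspan_newtonE: Seta.
have [c [Tc ->]] := Seta; apply: vge_mulmx => [? ?|? ?]; first by rewrite ord1.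
by rewrite newton_mxE; apply: vge_newton.
Qed.

Lemma newton_basis : is_T_basis v (Tspan newton_mx) (fun i : 'I_m => newton_row i).
Proof.
rewrite (_ : (fun i : 'I_m => newton_row i) = fun i => row i newton_mx).
  exact: Tspan_basis newton_mx_unit.
by apply: functional_extensionality => i; rewrite rowK.
Qed.

Lemma Tspan_newton_row (i : nat) : Tspan newton_mx (newton_row i).
Proof.
have [im|mi] := ltnP i m; last by rewrite newton_row_eq0 //; apply: Tspan0.
by have := Tspan_row newton_mx (Ordinal im); rewrite rowK.
Qed.

Local Notation tau_mx := (diag_mx (\row_j tau j)).

Lemma newton_row_mulX (i : 'I_m) :
  newton_row i *m tau_mx = newton_row i.+1 + tau i *: newton_row i.
Proof.
apply/rowP => j; rewrite mul_mx_diag !mxE newtonS.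
by rewrite mulrBr [tau i * _]mulrC subrK.
Qed.

Record tau_module (M : 'rV[L]_m -> Prop) : Prop := TauModule {
  tau_module0 : M 0;
  tau_moduleD : forall x y, M x -> M y -> M (x + y);
  tau_moduleZ : forall a x, vge 0 a -> M x -> M (a *: x);
  tau_moduleX : forall x, M x -> M (x *m tau_mx);
  tau_module1 : M (const_mx 1) }.

Lemma tau_module_sum M : tau_module M ->
  forall (I : Type) (r : seq I) (P : pred I) (F : I -> 'rV[L]_m),
  (forall i, P i -> M (F i)) -> M (\sum_(i <- r | P i) F i).
Proof. by case=> M0 MD *; apply: big_ind. Qed.

Lemma tau_module_newton_row M : tau_module M -> forall i, M (newton_row i).
Proof.
case=> M0 MD MZ MX M1; elim=> [|i IH]; first by rewrite newton_row0.
have [im|mi] := ltnP i m; last by rewrite newton_row_eq0 // leqW.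
have -> : newton_row i.+1 =
    newton_row i *m tau_mx + (- tau (Ordinal im)) *: newton_row i.
  by rewrite (newton_row_mulX (Ordinal im)) scaleNr addrK.
by apply/MD/MZ => //; [apply: MX | apply/vgeN/tauT].
Qed.

Lemma Tspan_newton_sub M : tau_module M -> forall eta, Tspan newton_mx eta -> M eta.
Proof.
move=> MM _ [c [Tc ->]]; rewrite mulmx_sum_row; apply: (tau_module_sum MM) => i _.
by rewrite rowK; apply: (tau_moduleZ MM (Tc i)); apply: tau_module_newton_row.
Qed.

Lemma tau_module_poly M (f : {poly L}) :
  tau_module M -> (forall k, vge 0 f`_k) -> M (\row_j f.[tau j]).
Proof.
move=> MM; elim/poly_ind: f => [|f c IH] Tf.
  have -> : \row_j (0 : {poly L}).[tau j] = 0 by apply/rowP => j; rewrite !mxE horner0.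
  exact: tau_module0 MM.
have -> : \row_j (f * 'X + c%:P).[tau j] =
    (\row_j f.[tau j]) *m tau_mx + c *: const_mx 1.
  by apply/rowP => j; rewrite mul_mx_diag !mxE hornerMXaddC mulr1.
apply: (tau_moduleD MM); first apply/(tau_moduleX MM)/IH => k.
  by have := Tf k.+1; rewrite coefD coefMX coefC /= addr0.
apply: (tau_moduleZ MM) (tau_module1 MM).
by have := Tf 0%N; rewrite coefD coefMX coefC /= add0r.
Qed.

Lemma tau_module_Tspan_newton : tau_module (Tspan newton_mx).
Proof.
split; [exact: Tspan0 | exact: TspanD | exact: TspanZ | |].
  move=> _ [c [Tc ->]]; rewrite -mulmxA mulmx_sum_row.
  apply: big_ind => [|x y|i _]; [exact: Tspan0 | exact: TspanD |].
  rewrite row_mul rowK newton_row_mulX; apply/TspanZ/TspanD => //.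
    exact: Tspan_newton_row.
  exact/TspanZ/Tspan_newton_row.
by rewrite -newton_row0; apply: Tspan_newton_row.
Qed.

Definition newton_normal_mx : 'M[L]_m :=
  \matrix_(i, j) (newton i (tau j) / newton i (tau i)).

Lemma newton_normal_mxE :
  newton_normal_mx = diag_mx (\row_i (newton i (tau i))^-1) *m newton_mx.
Proof. by apply/matrixP => i j; rewrite mul_diag_mx !mxE mulrC. Qed.

Lemma interp_defect_normal_mx (w : 'rV[L]_m) :
  interp_defect (w *m newton_normal_mx) = w.
Proof.
rewrite newton_normal_mxE mulmxA interp_defect_newton; apply/rowP => i.
by rewrite mul_mx_diag !mxE mulfVK ?newton_diag_neq0.
Qed.

Lemma interp_defectE (Q : 'M[L]_m) eta :
  newton_normal_mx *m Q = 1%:M -> interp_defect eta = eta *m Q.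
Proof.
by move=> PQ; rewrite -{1}[eta]mulmx1 -(mulmx1C PQ) mulmxA interp_defect_normal_mx.
Qed.

Lemma det_newton_normal_mx : \det newton_normal_mx = 1.
Proof.
rewrite -det_tr det_trig; last first.
  by apply/is_trig_mxP => i j ji; rewrite !mxE newton_root ?mul0r.
by apply: big1 => i _; rewrite !mxE divff ?newton_diag_neq0.
Qed.

Section MinimalOrdering.
Hypothesis tau_min : minimally_ordered v tau.

Lemma phi_mono (i j : 'I_m) : (i <= j)%N -> phi v tau i <= phi v tau j.
Proof.
rewrite leq_eqVlt => /orP[/eqP/val_inj -> //|ij].
apply: le_trans (proj2 tau_min i j ij) _.
rewrite /phi (bigID (fun k : 'I_m => (k < i)%N) (fun k : 'I_m => (k < j)%N)) /=.
rewrite [X in _ <= X + _](eq_bigl (fun k : 'I_m => (k < i)%N)) => [|k]; last first.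
  by case: (ltnP k i) => ki; rewrite ?andbT ?andbF // (ltn_trans ki ij).
rewrite lerDl; apply: sumr_ge0 => k /andP[kj _].
case: (vgeB (tauT j) (tauT k)) => [/eqP|//].
by rewrite subr_eq0 (inj_eq tau_inj) -(inj_eq val_inj) gtn_eqF.
Qed.

Lemma vge_newton_normal_mx i j : vge 0 (newton_normal_mx i j).
Proof.
rewrite mxE; have [ji|ij] := ltnP j i; first by rewrite newton_root // mul0r; left.
have [Nii vNii] := dval_newton (leqnn i); have [Nij vNij] := dval_newton ij.
right; rewrite dvalM ?invr_neq0 // dvalV // vNii vNij subr_ge0.
by move: ij; rewrite leq_eqVlt => /orP[/eqP/val_inj -> //|ij]; apply: (proj2 tau_min).
Qed.

Lemma elem_divs_newton : elem_divs v t (Tspan newton_mx) (phi v tau).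
Proof.
have PQ : newton_normal_mx *m \adj newton_normal_mx = 1%:M.
  by rewrite mul_mx_adj det_newton_normal_mx.
split; first exact: phi_mono.
exists newton_normal_mx, (\adj newton_normal_mx).
split; first exact: vge_newton_normal_mx.
split; first exact/vge_adj/vge_newton_normal_mx.
split=> // x; rewrite Tspan_newtonE (interp_defectE _ PQ).
exact: iff_sym (ediv_formE _ _ PQ).
Qed.

End MinimalOrdering.
End Nodes.
End Uniformizer.
End DVR.

Section DedekindEmbedding.
Variables (K : fieldType) (L : splittingFieldType K) (v : L -> int).
Hypothesis hv : is_dval v.
Hypothesis hTG : forall (g : gal_of {:L}) (x : L), inT v x -> inT v (g x).
Variables (theta : L) (theta_T : inT v theta).
Hypothesis T_gen : forall x : L, inT v x ->
  exists p : {poly K}, (forall i, inT v ((p`_i)%:A)) /\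
                       x = (map_poly (in_alg L) p).[theta].
Variables (m : nat) (sigma : 'I_m -> gal_of {:L}).
Local Notation tau := (fun j : 'I_m => sigma j theta).

Lemma im_deltaD x y :
  im_delta v sigma x -> im_delta v sigma y -> im_delta v sigma (x + y).
Proof.
move=> [n1 [x1 [y1 [Tx1 [Ty1 ->]]]]] [n2 [x2 [y2 [Tx2 [Ty2 ->]]]]].
pose glue (f1 : 'I_n1 -> L) (f2 : 'I_n2 -> L) (k : 'I_(n1 + n2)) :=
  match split k with inl a => f1 a | inr b => f2 b end.
have glue_l f1 f2 k : glue f1 f2 (lshift n2 k) = f1 k.
  by rewrite /glue (unsplitK (inl _ k) : split (lshift n2 k) = inl k).
have glue_r f1 f2 k : glue f1 f2 (rshift n1 k) = f2 k.
  by rewrite /glue (unsplitK (inr _ k) : split (rshift n1 k) = inr k).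
exists (n1 + n2)%N, (glue x1 x2), (glue y1 y2); split; last split.
- by move=> k; rewrite /glue; case: split.
- by move=> k; rewrite /glue; case: split.
by rewrite big_split_ord; congr (_ + _); apply: eq_bigr => k _; rewrite ?glue_l ?glue_r.
Qed.

Lemma tau_module_im_delta : tau_module v tau (im_delta v sigma).
Proof.
split.
- exists 0%N, (fun _ => 0), (fun _ => 0); rewrite big_ord0.
  by split=> [k|]; [left | split=> // k; left].
- exact: im_deltaD.
- move=> a _ Ta [n [x [y [Tx [Ty ->]]]]].
  exists n, (fun k => a * x k), y; split=> [k|]; first by have := vgeTM hv Ta (Tx k).
  split=> //.
  rewrite scaler_sumr; apply: eq_bigr => k _; apply/rowP => j.
  by rewrite !mxE mulrA.
- move=> _ [n [x [y [Tx [Ty ->]]]]].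
  exists n, x, (fun k => theta * y k); split=> //; split=> [k|].
    by have := vgeTM hv theta_T (Ty k).
  rewrite mulmx_suml; apply: eq_bigr => k _; apply/rowP => j.
  by rewrite mul_mx_diag !mxE rmorphM mulrCA mulrC.
have T1 : inT v 1 by have := vge_one hv.
exists 1%N, (fun _ => 1), (fun _ => 1); split=> [_|]; first exact: T1.
split=> [_|]; first exact: T1.
by rewrite big_ord1; apply/rowP => j; rewrite !mxE rmorph1 mulr1.
Qed.

Lemma im_delta_sub M : tau_module v tau M -> forall eta, im_delta v sigma eta -> M eta.
Proof.
move=> MM _ [n [x [y [Tx [Ty ->]]]]].
apply: (tau_module_sum MM) => k _.
have [p [Tp ->]] := T_gen (Ty k).
have -> : \row_j (x k * sigma j (map_poly (in_alg L) p).[theta]) =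
          \row_j ((x k)%:P * map_poly (in_alg L) p).[tau j].
  apply/rowP => j; rewrite !mxE hornerCM -horner_map /= -map_poly_comp.
  by congr (_ * _.[_]); apply: eq_map_poly => a /=; rewrite rmorph_alg.
apply: (tau_module_poly MM) => i; rewrite coefCM coef_map.
by have := vgeTM hv (Tx k) (Tp i).
Qed.

Lemma im_deltaE : im_delta v sigma = Tspan v (newton_mx tau).
Proof.
have tauT j : vge v 0 (tau j) by apply: hTG.
apply: functional_extensionality => eta; apply: propositional_extensionality.
split; first exact: im_delta_sub (tau_module_Tspan_newton hv tauT) eta.
exact (Tspan_newton_sub hv tauT tau_module_im_delta (eta := eta)).
Qed.

End DedekindEmbedding.

Unset Implicit Arguments.

Theorem proposition1p14
  (K : fieldType) (L : splittingFieldType K)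
  (* L/K finite Galois *)
  (hgal : galois 1%VS {:L})
  (* T : the discrete valuation ring of the discrete valuation v on L;
     t generates its maximal ideal *)
  (v : L -> int) (hv : is_dval v) (t : L) (ht0 : t != 0) (ht : v t = 1)
  (* S = T \cap K is a discrete valuation ring (v nontrivial on K) *)
  (hS : exists k : K, k != 0 /\ 0 < v (k%:A))
  (* the Galois group maps T into T *)
  (hTG : forall (g : gal_of {:L}) (x : L), inT v x -> inT v (g x))
  (* T = S[theta] *)
  (theta : L) (hthT : inT v theta)
  (hgen : forall x : L, inT v x ->
     exists p : {poly K}, (forall i, inT v ((p`_i)%:A)) /\
                          x = (map_poly (in_alg L) p).[theta])
  (* enumeration of G with sigma_0 = id and tau minimally ordered *)
  (m : nat) (sigma : 'I_m -> gal_of {:L}) (hsig : bijective sigma)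
  (hsig0 : forall i : 'I_m, nat_of_ord i = 0%N -> sigma i = 1%g)
  (hmin : minimally_ordered v (fun j => sigma j theta)) :
  let tau := fun j : 'I_m => sigma j theta in
  (* (i) *)
  (elem_divs v t (im_delta v sigma) (phi v tau) /\
   forall e : 'I_m -> int, elem_divs v t (im_delta v sigma) e -> e = phi v tau) /\
  (* (ii) *)
  (forall eta : 'rV[L]_m,
     im_delta v sigma eta <->
     ((forall j, inT v (eta 0 j)) /\
      forall i : 'I_m,
        in_tpow v t (phi v tau i)
          (eta 0 i - \sum_(j < m | (j < i)%N) eta 0 j * Lcoef tau j i))) /\
  (* (iii) *)
  is_T_basis v (im_delta v sigma)
    (fun i : 'I_m => \row_j (\prod_(k < m | (k < i)%N) (tau j - tau k))).
Proof.
move=> tau.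
have tau_inj : injective tau := proj1 hmin.
have tauT j : vge v 0 (tau j) := hTG (sigma j) theta hthT.
have ediv_phi := elem_divs_newton hv ht0 ht tauT tau_inj hmin.
rewrite (im_deltaE hv hTG hthT hgen).
split; [split=> // e ediv_e | split].
- exact (elem_divs_uniq hv ht0 ht ediv_e ediv_phi).
- exact (Tspan_newton_interpE hv ht0 ht tauT tau_inj).
- exact (newton_basis hv tau_inj).
Qed.
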